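(* Suppose $\mathcal L\subsetneq\mathcal K\subseteq\{1,\dots,n\}$ and $Q$ is a prime ideal of $R$ containing $L_{\mathcal L}+I(A_{\mathcal K})$. Then there is some $\mathcal K'$ with $\mathcal L\subseteq\mathcal K'\subseteq\mathcal K$ and $|\mathcal K'|+1=|\mathcal K|$ such that $L_{\mathcal K'}\subseteq Q$.
   Context: $\mathbb K$ is a field, $R=\mathbb K[x_{i_1,\dots,i_n}:1\le i_j\le a_j]$, $A=(x_{i_1,\dots,i_n})$ the generic table. For a tuple $\sigma$ with $\sigma_j\in\{1,\dots,a_j\}\cup\{+\}$, $x_\sigma$ is the sum of all $x_{i_1,\dots,i_n}$ with $i_j=\sigma_j$ whenever $\sigma_j\ne+$. For $\mathscr J=\{j_1<\dots<j_m\}\subseteq\{1,\dots,n\}$ the margin $A_{\mathscr J}$ is the table whose $(i_1,\dots,i_m)$ entry is $x_\sigma$ with $\sigma_{j_r}=i_r$, $\sigma_j=+$ for $j\notin\mathscr J$; $L_{\mathscr J}$ is the ideal generated by the entries of $A_{\mathscr J}$. For a table $B$ with entries in $R$, $I(B)$ is the ideal generated by its generalized $2\times2$ minors $\det\begin{pmatrix} b_{i_1,\dots,i_m} & b_{j_1,\dots,j_{l-1},i_l,j_{l+1},\dots,j_m}\\ b_{i_1,\dots,i_{l-1},j_l,i_{l+1},\dots,i_m} & b_{j_1,\dots,j_m}\end{pmatrix}$. *)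

From HB Require Import structures.
From mathcomp Require Import all_boot all_algebra.
From mathcomp Require Import mpoly.
Set Implicit Arguments. Unset Strict Implicit. Unset Printing Implicit Defensive.
Import GRing.Theory.
Local Open Scope ring_scope.

(* Index tuples (i_1,...,i_n) with i_j in {1..a_j}, 0-based: i_j : 'I_(a j). *)
Definition cell (n : nat) (a : 'I_n -> nat) : finType :=
  {dffun forall j : 'I_n, 'I_(a j)}.

(* R = K[x_t : t cell]: multivariate polynomials in #|cell| variables,
   the variable x_t being 'X_(enum_rank t). *)
Notation tabring K a := {mpoly K[#|cell a|]}.

Definition xvar (K : fieldType) (n : nat) (a : 'I_n -> nat) (t : cell a)
  : tabring K a := 'X_(enum_rank t).

(* Entry of the margin A_J at the index determined by s on J:
   sum of all x_t with t_j = s_j for all j in J. *)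
Definition margin_entry (K : fieldType) (n : nat) (a : 'I_n -> nat)
  (J : {set 'I_n}) (s : cell a) : tabring K a :=
  \sum_(t : cell a | [forall j in J, t j == s j]) xvar K t.

Definition ideal_gen (R : comNzRingType) (G : R -> Prop) (p : R) : Prop :=
  exists (m : nat) (c g : 'I_m -> R),
    (forall i, G (g i)) /\ p = \sum_(i < m) c i * g i.

Definition margin_gens (K : fieldType) (n : nat) (a : 'I_n -> nat)
  (J : {set 'I_n}) (p : tabring K a) : Prop :=
  exists s : cell a, p = margin_entry K J s.

Definition swapc (n : nat) (a : 'I_n -> nat) (l : 'I_n) (s t : cell a)
  : cell a := [ffun j => if j == l then s j else t j].

(* Generators of I(A_J): generalized 2x2 minors
   b_s b_t - b_{t with l-th coord of s} b_{s with l-th coord of t}, l in J. *)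
Definition minor_gens (K : fieldType) (n : nat) (a : 'I_n -> nat)
  (J : {set 'I_n}) (p : tabring K a) : Prop :=
  exists (s t : cell a) (l : 'I_n), l \in J /\
    p = margin_entry K J s * margin_entry K J t
        - margin_entry K J (swapc l s t) * margin_entry K J (swapc l t s).

Definition prime_ideal (R : comNzRingType) (Q : R -> Prop) : Prop :=
  [/\ Q 0,
      (forall x y, Q x -> Q y -> Q (x + y)),
      (forall r x, Q x -> Q (r * x)),
      ~ Q 1 &
      (forall x y, Q (x * y) -> Q x \/ Q y)].

(* Write [b] for the entries of [A_K] and [m_J] for those of [A_J].  Splitting
   [m_J] over the values of one more coordinate of [K] turns the minors of
   [A_K] into congruences modulo [Q], e.g. [m_J(w) b(w) = m_{J+k}(w) m_{K-k}(w)]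
   for [k] in [K \ J].  If no [L_{K-j}], [j] in [K \ L], were inside [Q], pick
   [s] with [m_{K-j}(s)] outside [Q] and a cell [w] of that sum with [b(w)]
   outside [Q]; the congruences, primality and downward induction from [K] to
   [L] then force [m_L(w)] outside [Q], contradicting [L_L] inside [Q]. *)
From HB Require Import structures.
From mathcomp Require Import all_boot all_algebra.
From mathcomp Require Import mpoly.
From Stdlib Require Import Classical.
Import GRing.Theory.
Set Implicit Arguments. Unset Strict Implicit.
Local Open Scope ring_scope.

Lemma subset_down_ind (T : finType) (K : {set T}) (P : {set T} -> Prop) :
  P K ->
  (forall (J : {set T}) k, J \subset K -> k \in K :\: J -> P (k |: J) -> P J) ->
  forall J : {set T}, J \subset K -> P J.
Proof.
move=> PK Pstep J; move: {2}#|K :\: J| (erefl #|K :\: J|) => m.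
elim: m J => [|m IH] J cardKJ JK.
  suff -> : J = K by [].
  by apply/eqP; rewrite eqEsubset JK -setD_eq0 -cards_eq0 cardKJ.
have [k kKJ] : exists k, k \in K :\: J by apply/set0Pn; rewrite -card_gt0 cardKJ.
have kK : k \in K by move: kKJ; rewrite inE => /andP[].
apply: (Pstep J k JK kKJ); apply: IH; last by rewrite subUset sub1set kK JK.
by move: cardKJ; rewrite (cardsD1 k) kKJ setDDl setUC => -[].
Qed.

Lemma setD1_between (T : finType) (L K : {set T}) j :
  L \subset K -> j \in K :\: L ->
  [/\ L \subset K :\ j, K :\ j \subset K & (#|K :\ j| + 1)%N = #|K|].
Proof.
move=> LK; rewrite inE => /andP[jL jK]; split; last by rewrite (cardsD1 j K) jK addnC.
  apply/subsetP => x xL; rewrite !inE (subsetP LK) // andbT.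
  by apply: contraNneq jL => <-.
exact: subD1set.
Qed.

Section PrimeIdeal.

Variables (R : comNzRingType) (Q : R -> Prop).
Hypothesis Qprime : prime_ideal Q.

Lemma prime_idealD x y : Q x -> Q y -> Q (x + y).
Proof. by case: Qprime => _ QD _ _ _; apply: QD. Qed.

Lemma prime_idealMl r x : Q x -> Q (r * x).
Proof. by case: Qprime => _ _ QM _ _; apply: QM. Qed.

Lemma prime_idealMr x r : Q x -> Q (x * r).
Proof. by rewrite mulrC; apply: prime_idealMl. Qed.

Lemma prime_idealB x y : Q x -> Q y -> Q (x - y).
Proof. by move=> Qx Qy; rewrite -mulN1r; apply: prime_idealD Qx (prime_idealMl _ Qy). Qed.

Lemma prime_ideal_sum (I : finType) (P : pred I) (F : I -> R) :
  (forall i, P i -> Q (F i)) -> Q (\sum_(i | P i) F i).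
Proof. by case: Qprime => Q0 _ _ _ _; apply: big_ind => //; apply: prime_idealD. Qed.

Lemma prime_ideal_sum_notin (I : finType) (P : pred I) (F : I -> R) :
  ~ Q (\sum_(i | P i) F i) -> exists2 i, P i & ~ Q (F i).
Proof.
move=> Qsum; apply: NNPP => noi; apply/Qsum/prime_ideal_sum => i Pi.
by apply: NNPP => QFi; apply: noi; exists i.
Qed.

Lemma prime_ideal_congr x y : Q (x - y) -> Q x <-> Q y.
Proof.
move=> Qxy; split => [Qx | Qy]; last by rewrite -(subrK y x); apply: prime_idealD.
by rewrite -[y](subKr x); apply: prime_idealB.
Qed.

Lemma prime_idealM_notin x y : ~ Q x -> ~ Q y -> ~ Q (x * y).
Proof. by case: Qprime => _ _ _ _ Qp Qx Qy /Qp[]. Qed.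

Lemma ideal_gen_sub (G : R -> Prop) p :
  (forall g, G g -> Q g) -> ideal_gen G p -> Q p.
Proof.
move=> GQ [m [c [g [Gg ->]]]]; apply: prime_ideal_sum => i _.
exact/prime_idealMl/GQ.
Qed.

End PrimeIdeal.

Lemma ideal_gen_base (R : comNzRingType) (G : R -> Prop) g :
  G g -> ideal_gen G g.
Proof. by exists 1%N, (fun=> 1), (fun=> g); rewrite big_ord1 mul1r. Qed.

Section Swap.

Variables (n : nat) (a : 'I_n -> nat).
Implicit Types (c s t : cell a) (j k : 'I_n).

Definition agree_off k c s : bool := [forall j, (j != k) ==> (c j == s j)].

Lemma swapc_id k s : swapc k s s = s.
Proof. by apply/ffunP => i; rewrite ffunE; case: (i == k). Qed.

Lemma swapc_swapl k c s t : swapc k (swapc k c s) t = swapc k c t.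
Proof. by apply/ffunP => i; rewrite !ffunE; case: (i == k). Qed.

Lemma swapc_swapr k c s t : swapc k s (swapc k c t) = swapc k s t.
Proof. by apply/ffunP => i; rewrite !ffunE; case: (i == k). Qed.

Lemma swapc_swapl_neq j k c s t : j != k ->
  swapc j (swapc k c s) t = swapc j s t.
Proof.
move=> jk; apply/ffunP => i; rewrite !ffunE.
by case: (eqVneq i j) => [->|//]; rewrite (negbTE jk).
Qed.

Lemma swapcC j k c s t : j != k ->
  swapc j t (swapc k c s) = swapc k c (swapc j t s).
Proof.
move=> jk; apply/ffunP => i; rewrite !ffunE.
by case: (eqVneq i j) => [->|//]; rewrite (negbTE jk).
Qed.

End Swap.

Section Margins.

Variables (KK : fieldType) (n : nat) (a : 'I_n -> nat).
Implicit Types (J : {set 'I_n}) (c e s t : cell a).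

(* The cells [c] agreeing with [e] off [k] enumerate the values of
   coordinate [k], each exactly once. *)
Lemma margin_entry_splitU1 J k e s : k \notin J ->
  margin_entry KK J s =
  \sum_(c | agree_off k c e) margin_entry KK (k |: J) (swapc k c s).
Proof.
move=> kJ; have neq_k j : j \in J -> (j == k) = false.
  by move=> jJ; apply/negbTE; apply: contraNneq kJ => <-.
rewrite /margin_entry (exchange_big_dep (fun t => [forall j in J, t j == s j])) /=.
  apply: eq_bigr => t /forallP st; rewrite (big_pred1 (swapc k t e)) // => c /=.
  apply/andP/eqP => [[/forallP ce /forallP ct]|->].
    apply/ffunP => j; rewrite ffunE; case: (eqVneq j k) => [->|jk].
      by have := ct k; rewrite setU11 ffunE eqxx => /eqP.
    by have := ce j; rewrite jk => /eqP.
  split; apply/forallP => j; first by apply/implyP => jk; rewrite ffunE (negbTE jk).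
  apply/implyP; rewrite in_setU1 => /predU1P[->|jJ]; first by rewrite !ffunE eqxx.
  by rewrite !ffunE neq_k //; apply: (implyP (st j)).
move=> c t _ /forallP ct; apply/forallP => j; apply/implyP => jJ.
by have := ct j; rewrite in_setU1 jJ orbT ffunE neq_k.
Qed.

Lemma margin_entry_setD1 (K : {set 'I_n}) j e s : j \in K ->
  margin_entry KK (K :\ j) s =
  \sum_(c | agree_off j c e) margin_entry KK K (swapc j c s).
Proof. by move=> jK; rewrite (@margin_entry_splitU1 _ j e) ?setD11 // setD1K. Qed.

Variables (K : {set 'I_n}) (Q : tabring KK a -> Prop).
Hypothesis Qprime : prime_ideal Q.
Local Notation b := (margin_entry KK K).
Hypothesis Qminor : forall s t j, j \in K ->
  Q (b s * b t - b (swapc j s t) * b (swapc j t s)).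

Lemma margin_minor_mem J j s t : J \subset K -> j \in J ->
  Q (margin_entry KK J s * b t
     - margin_entry KK J (swapc j t s) * b (swapc j s t)).
Proof.
move=> JK; move: J JK j s t; apply: subset_down_ind => [j s t jK | J k _ kKJ IH j s t jJ].
  by rewrite [_ * b (swapc j s t)]mulrC; apply: Qminor.
have kJ : k \notin J by move: kKJ; rewrite inE => /andP[].
have jk : j != k by apply: contraNneq kJ => <-.
rewrite !(margin_entry_splitU1 s _ kJ) !mulr_suml -sumrB.
apply: prime_ideal_sum => // c _.
by have := IH j (swapc k c s) t (setU1r k jJ); rewrite swapcC // swapc_swapl_neq.
Qed.

Lemma margin_setD1_minor_mem j s w : j \in K ->
  Q (margin_entry KK (K :\ j) s * b w
     - margin_entry KK (K :\ j) w * b (swapc j w s)).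
Proof.
move=> jK; rewrite !(margin_entry_setD1 s _ jK) !mulr_suml -sumrB.
apply: prime_ideal_sum => // c _.
by have := Qminor (swapc j c s) w jK; rewrite swapc_swapl swapc_swapr.
Qed.

Lemma margin_step_mem J k w : J \subset K -> k \in K :\: J ->
  Q (margin_entry KK J w * b w
     - margin_entry KK (k |: J) w * margin_entry KK (K :\ k) w).
Proof.
move=> JK; rewrite inE => /andP[kJ kK].
rewrite (margin_entry_splitU1 w _ kJ) (margin_entry_setD1 w _ kK).
rewrite mulr_suml mulr_sumr -sumrB; apply: prime_ideal_sum => // c _.
have JkK : k |: J \subset K by rewrite subUset sub1set kK.
have := margin_minor_mem (swapc k c w) w JkK (setU11 k J).
by rewrite swapc_swapr swapc_id swapc_swapl.
Qed.

Lemma margin_setD1_notin j s w : j \in K ->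
  ~ Q (margin_entry KK (K :\ j) s) -> ~ Q (b w) ->
  ~ Q (margin_entry KK (K :\ j) w).
Proof.
move=> jK Qs Qw Qjw; apply: (prime_idealM_notin Qprime Qs Qw).
rewrite (prime_ideal_congr Qprime (margin_setD1_minor_mem s w jK)).
exact: prime_idealMr.
Qed.

Lemma margin_notin (L : {set 'I_n}) w : L \subset K -> ~ Q (b w) ->
  (forall k, k \in K :\: L -> ~ Q (margin_entry KK (K :\ k) w)) ->
  ~ Q (margin_entry KK L w).
Proof.
move=> LK Qw QKk; suff: forall J, J \subset K -> L \subset J -> ~ Q (margin_entry KK J w).
  by apply.
apply: subset_down_ind => [_ //|J k JK kKJ IH LJ].
have kKL : k \in K :\: L.
  by move: kKJ; rewrite !inE => /andP[kJ ->]; rewrite andbT (contraNN (subsetP LJ k)).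
have Qprod := prime_idealM_notin Qprime (IH (subset_trans LJ (subsetU1 k J))) (QKk k kKL).
move=> QJw; apply: Qprod; rewrite -(prime_ideal_congr Qprime (margin_step_mem w JK kKJ)).
exact: prime_idealMr.
Qed.

End Margins.

Unset Implicit Arguments.
Theorem corollary6p2 (KK : fieldType) (n : nat) (a : 'I_n -> nat)
  (L K : {set 'I_n}) (Q : tabring KK a -> Prop) :
  L \proper K ->
  prime_ideal Q ->
  (forall p : tabring KK a,
     ideal_gen (fun q => margin_gens L q \/ minor_gens K q) p -> Q p) ->
  exists K' : {set 'I_n},
    [/\ L \subset K', K' \subset K, (#|K'| + 1)%N = #|K| &
        forall p : tabring KK a, ideal_gen (margin_gens K') p -> Q p].
Proof.
move=> /properP[LK [j0 j0K j0L]] Qprime HQ.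
have QL s : Q (margin_entry KK L s) by apply/HQ/ideal_gen_base; left; exists s.
have Qminor s t j : j \in K -> Q (margin_entry KK K s * margin_entry KK K t
    - margin_entry KK K (swapc j s t) * margin_entry KK K (swapc j t s)).
  by move=> jK; apply/HQ/ideal_gen_base; right; exists s, t, j.
apply: NNPP => noK'.
have Kj_notin j : j \in K :\: L -> exists s, ~ Q (margin_entry KK (K :\ j) s).
  move=> jKL; apply: NNPP => allQ; apply: noK'; exists (K :\ j).
  have [LKj KjK cardKj] := setD1_between LK jKL; split=> // p.
  apply: (ideal_gen_sub Qprime) => _ [s ->].
  by apply: NNPP => Qs; apply: allQ; exists s.
have [|s0 Qs0] := Kj_notin j0; first by rewrite inE j0L.
have [c _ Qw] : exists2 c, agree_off j0 c s0 & ~ Q (margin_entry KK K (swapc j0 c s0)).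
  by apply: (prime_ideal_sum_notin Qprime); rewrite -margin_entry_setD1.
apply: (margin_notin Qprime Qminor LK Qw) (QL _) => j jKL.
have [s Qs] := Kj_notin j jKL.
by apply: margin_setD1_notin Qs Qw => //; move: jKL; rewrite inE => /andP[].
Qed.
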